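(* Consider a human–algorithm system (as defined in the context) with $A\le H$, let $s$ be a weighting function for $c$, and write $s_i=s(a_i,h_i)$ and $C=\sum_{i=1}^N p_i\,c(a_i,h_i)$. Let $\epsilon_a=\max_i a_i-\min_i a_i$ and $\epsilon_h=\max_i h_i-\min_i h_i$ be the loss disparities of the algorithm and of the unaided human. If the system exhibits complementarity, then $$A-C+(H-A)\sum_{i=1}^N p_i\,s_i<\epsilon_a+\epsilon_h.$$
   Context: A human–algorithm system consists of: an integer $N\ge1$ (number of regimes); probabilities $p_1,\dots,p_N\ge 0$ with $\sum_i p_i=1$; algorithmic losses $a_1,\dots,a_N\ge 0$ and unaided-human losses $h_1,\dots,h_N\ge0$; and a combining function $c:[0,\infty)^2\to\mathbb{R}$ satisfying $\min(a,h)\le c(a,h)\le\max(a,h)$ for all $a,h\ge0$, where $c(a_i,h_i)$ is the loss of the combined system in regime $i$. Write $A=\sum_i p_i a_i$ and $H=\sum_i p_i h_i$. The system exhibits complementarity if $\sum_{i=1}^N p_i\,c(a_i,h_i)<\min(A,H)$. A weighting function for $c$ is a function $s:[0,\infty)^2\to[0,1]$ with $c(a,h)=(1-s(a,h))a+s(a,h)h$ for all $a,h\ge0$. *)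

From mathcomp Require Import all_boot all_order all_algebra.
Set Implicit Arguments. Unset Strict Implicit. Unset Printing Implicit Defensive.
Import Order.TTheory GRing.Theory Num.Theory.
Local Open Scope ring_scope.

(* Regimes are indexed by 'I_N with N >= 1 enforced by writing N = n.+1. *)

Definition maxI (R : realDomainType) (n : nat) (f : 'I_n.+1 -> R) : R :=
  \big[Num.max/f ord0]_(i < n.+1) f i.
Definition minI (R : realDomainType) (n : nat) (f : 'I_n.+1 -> R) : R :=
  \big[Num.min/f ord0]_(i < n.+1) f i.

Definition expect (R : realDomainType) (n : nat) (p x : 'I_n.+1 -> R) : R :=
  \sum_(i < n.+1) p i * x i.

Definition is_system (R : realDomainType) (n : nat) (p a h : 'I_n.+1 -> R)
  (c : R -> R -> R) : Prop :=
  (forall i, 0 <= p i) /\ \sum_(i < n.+1) p i = 1 /\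
  (forall i, 0 <= a i) /\ (forall i, 0 <= h i) /\
  (forall x y, 0 <= x -> 0 <= y -> Num.min x y <= c x y <= Num.max x y).

Definition complementarity (R : realDomainType) (n : nat) (p a h : 'I_n.+1 -> R)
  (c : R -> R -> R) : Prop :=
  \sum_(i < n.+1) p i * c (a i) (h i) < Num.min (expect p a) (expect p h).

Definition weighting (R : realDomainType) (c s : R -> R -> R) : Prop :=
  forall x y, 0 <= x -> 0 <= y ->
    0 <= s x y <= 1 /\ c x y = (1 - s x y) * x + s x y * y.

(** The weighting function writes the combined loss as [c_i = a_i + s_i (h_i - a_i)], so
    with [S = sum_i p_i s_i] the left-hand side equals
    [sum_i p_i s_i ((a_i - A) + (H - h_i))], which is at most [S (eps_a + eps_h)].
    Since [A - C = sum_i p_i s_i (a_i - h_i)] and [H - C = sum_i p_i (1 - s_i) (h_i - a_i)],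
    complementarity yields a regime [i] with [p_i s_i > 0], [h_i < a_i] and a regime [j]
    with [p_j (1 - s_j) > 0], [a_j < h_j].  Then
    [eps_a + eps_h >= (a_i - h_i) + (h_j - a_j) > 0] and [1 - S >= p_j (1 - s_j) > 0],
    so [S (eps_a + eps_h) < eps_a + eps_h]. *)

From mathcomp Require Import all_boot all_order all_algebra.
From mathcomp Require Import ring lra.
Import Order.TTheory GRing.Theory Num.Theory.
Local Open Scope ring_scope.

Lemma maxI_ge {R : realDomainType} {n} (f : 'I_n.+1 -> R) i : f i <= maxI f.
Proof. exact: le_bigmax. Qed.

Lemma minI_le {R : realDomainType} {n} (f : 'I_n.+1 -> R) i : minI f <= f i.
Proof. exact: bigmin_le. Qed.

Lemma weighted_sumr_gt0 (R : realDomainType) (I : finType) (q x : I -> R) :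
  (forall i, 0 <= q i) -> 0 < \sum_i q i * x i -> exists i, 0 < q i /\ 0 < x i.
Proof.
move=> q_ge0 sum_gt0.
have [i qx_gt0] : exists i, 0 < q i * x i.
  apply/existsP; apply: contraTT sum_gt0 => /existsPn qx_le0.
  by rewrite -leNgt; apply: sumr_le0 => i _; rewrite leNgt qx_le0.
have q_gt0 : 0 < q i.
  by rewrite lt_def q_ge0 andbT; apply: contraTneq qx_gt0 => ->; rewrite mul0r ltxx.
by exists i; split; rewrite // -(pmulr_rgt0 _ q_gt0).
Qed.

Section ExpectBounds.
Variables (R : realDomainType) (n : nat) (p : 'I_n.+1 -> R).
Hypotheses (p_ge0 : forall i, 0 <= p i) (p_sum1 : \sum_i p i = 1).

Lemma expect_ge_minI (x : 'I_n.+1 -> R) : minI x <= expect p x.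
Proof.
rewrite /expect -[minI x]mul1r -p_sum1 mulr_suml.
by apply: ler_sum => i _; rewrite ler_wpM2l ?minI_le.
Qed.

Lemma expect_le_maxI (x : 'I_n.+1 -> R) : expect p x <= maxI x.
Proof.
rewrite /expect -[maxI x]mul1r -p_sum1 mulr_suml.
by apply: ler_sum => i _; rewrite ler_wpM2l ?maxI_ge.
Qed.

End ExpectBounds.

Section WeightedCombination.
Context {R : realDomainType} {n : nat} {p a h w : 'I_n.+1 -> R}.
Hypotheses (p_ge0 : forall i, 0 <= p i) (p_sum1 : \sum_i p i = 1).
Hypotheses (w_ge0 : forall i, 0 <= w i) (w_le1 : forall i, w i <= 1).

Let A := expect p a.
Let H := expect p h.
Let C := expect p (fun i => (1 - w i) * a i + w i * h i).

Lemma expect_sub_combined_l : A - C = \sum_i (p i * w i) * (a i - h i).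
Proof. by rewrite /A /C /expect -sumrB; apply: eq_bigr => i _; ring. Qed.

Lemma expect_sub_combined_r : H - C = \sum_i (p i * (1 - w i)) * (h i - a i).
Proof. by rewrite /H /C /expect -sumrB; apply: eq_bigr => i _; ring. Qed.

Lemma combined_gap_le :
  A - C + (H - A) * expect p w <= expect p w * ((maxI a - minI a) + (maxI h - minI h)).
Proof.
have A_ge : minI a <= A by exact: expect_ge_minI.
have H_le : H <= maxI h by exact: expect_le_maxI.
rewrite expect_sub_combined_l /expect mulr_sumr mulr_suml -big_split /=.
apply: ler_sum => i _; rewrite (mulrC (H - A)) -mulrDr.
rewrite ler_wpM2l ?mulr_ge0 //.
by have := maxI_ge a i; have := minI_le h i; lra.
Qed.

Lemma expect_weight_lt1 : C < H -> expect p w < 1.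
Proof.
rewrite -subr_gt0 expect_sub_combined_r => /weighted_sumr_gt0.
case=> [i|i [pw_gt0 _]]; first by rewrite mulr_ge0 ?subr_ge0.
rewrite -subr_gt0 -{1}p_sum1 /expect -sumrB (lt_le_trans pw_gt0) //.
rewrite (bigD1 i) //= mulrBr mulr1 lerDl.
by apply: sumr_ge0 => j _; rewrite -{1}[p j]mulr1 -mulrBr mulr_ge0 ?subr_ge0.
Qed.

Lemma disparity_gt0 : C < A -> C < H -> 0 < (maxI a - minI a) + (maxI h - minI h).
Proof.
rewrite -[C < A]subr_gt0 -[C < H]subr_gt0 expect_sub_combined_l expect_sub_combined_r.
move=> /weighted_sumr_gt0 [i|i [_ hi_lt_ai]]; first by rewrite mulr_ge0.
move=> /weighted_sumr_gt0 [j|j [_ aj_lt_hj]]; first by rewrite mulr_ge0 ?subr_ge0.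
have := maxI_ge a i; have := minI_le a j; have := maxI_ge h j; have := minI_le h i.
lra.
Qed.

Lemma combined_gap_lt :
  C < A -> C < H ->
  A - C + (H - A) * expect p w < (maxI a - minI a) + (maxI h - minI h).
Proof.
move=> CA CH; apply: (le_lt_trans combined_gap_le).
by rewrite gtr_pMl ?disparity_gt0 ?expect_weight_lt1.
Qed.

End WeightedCombination.

Theorem lemma9 (R : realFieldType) (n : nat) (p a h : 'I_n.+1 -> R)
  (c s : R -> R -> R) :
  is_system p a h c ->
  expect p a <= expect p h ->
  weighting c s ->
  complementarity p a h c ->
  let A := expect p a in
  let H := expect p h in
  let C := \sum_(i < n.+1) p i * c (a i) (h i) in
  let eps_a := maxI a - minI a in
  let eps_h := maxI h - minI h in
  A - C + (H - A) * (\sum_(i < n.+1) p i * s (a i) (h i)) < eps_a + eps_h.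
Proof.
move=> [p_ge0 [p_sum1 [a_ge0 [h_ge0 _]]]] _ s_weights.
rewrite /complementarity lt_min => /andP [CA CH] /=.
pose w i := s (a i) (h i).
have [w_ge0 w_le1] : (forall i, 0 <= w i) /\ (forall i, w i <= 1).
  by split=> i; have [/andP [] ] := s_weights _ _ (a_ge0 i) (h_ge0 i).
have C_eq : \sum_i p i * c (a i) (h i) = expect p (fun i => (1 - w i) * a i + w i * h i).
  by apply: eq_bigr => i _; have [_ ->] := s_weights _ _ (a_ge0 i) (h_ge0 i).
rewrite C_eq in CA CH *; exact (combined_gap_lt p_ge0 p_sum1 w_ge0 w_le1 CA CH).
Qed.
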